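(* Let $n\ge2$ and let $K\in\mathcal S_n$ with $\mathrm{Outrad}(K)<1$. Then \[ \mathrm{ext}_c(K)=\{\,y-u:\ y\in\partial K^c,\ u\in N_{K^c}(y),\ \mathbb R^+u\text{ is an extremal ray of the cone }\mathbb R^+N_{K^c}(y)\,\}. \]
   Context: $B(x,r)$ is the closed Euclidean ball. For $A\subseteq\mathbb R^n$, $A^c=\bigcap_{x\in A}B(x,1)$ (with $\emptyset^c=\mathbb R^n$) and $\mathrm{conv}_c(A)=A^{cc}$. $\mathcal S_n$ is the class of all sets of the form $\bigcap_{x\in A}B(x,1)$, $A\subseteq\mathbb R^n$. $\mathrm{Outrad}(K)$ is the minimal $R$ such that $K\subseteq B(z,R)$ for some $z$. A point $x\in K$ is $c$-extremal for $K$ if $x\in\mathrm{conv}_c(\{y,z\})$ with $y,z\in K$ implies $y=x$ or $z=x$; $\mathrm{ext}_c(K)$ is the set of $c$-extremal points. For a convex body $T$ and $z\in\partial T$, $N_T(z)$ is the set of unit outer normals at $z$, and $\mathbb R^+N_T(z)$ is the outer normal cone. *)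

(* Points of R^n are row vectors 'rV[R]_n
   over an abstract R : realType, with the EUCLIDEAN inner product / norm
   defined below (the library's own norm on matrices is the sup norm, which
   induces the same topology but not the same balls). *)
From HB Require Import structures.
From mathcomp Require Import all_boot all_order all_algebra.
From mathcomp Require Import all_classical all_reals all_analysis.
Set Implicit Arguments.
Unset Strict Implicit.
Unset Printing Implicit Defensive.
Import Order.TTheory GRing.Theory Num.Theory.
Import numFieldTopology.Exports.
Local Open Scope classical_set_scope.
Local Open Scope ring_scope.

Section Defs.
Variables (R : realType) (n : nat).
Notation V := 'rV[R]_n.

Definition edot (u v : V) : R := \sum_(i < n) u ord0 i * v ord0 i.
Definition enorm (u : V) : R := Num.sqrt (edot u u).

Definition eball (x : V) (r : R) : set V := [set y | enorm (y - x) <= r].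

(* A^c = intersection of the unit balls centred at points of A (= R^n if A empty) *)
Definition cdual (A : set V) : set V := \bigcap_(x in A) eball x 1.

Definition conv_c (A : set V) : set V := cdual (cdual A).

Definition in_Sn (K : set V) : Prop := exists A : set V, K = cdual A.

Definition Outrad (K : set V) : R :=
  inf [set r : R | exists z : V, K `<=` eball z r].

Definition ext_c (K : set V) : set V :=
  [set x | K x /\ forall y z : V, K y -> K z -> conv_c [set y; z] x ->
                                  y = x \/ z = x].

Definition bdry (T : set V) : set V := closure T `\` interior T.

Definition unit_normals (T : set V) (z : V) : set V :=
  [set u | enorm u = 1 /\ forall w : V, T w -> edot u (w - z) <= 0].

Definition pos_ray (u : V) : set V := [set v | exists t : R, 0 <= t /\ v = t *: u].
Definition pos_cone (S : set V) : set V :=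
  [set v | exists t : R, exists u : V, 0 <= t /\ S u /\ v = t *: u].

Definition extremal_ray (C rho : set V) : Prop :=
  (exists u : V, u != 0 /\ rho = pos_ray u) /\ rho `<=` C /\
  forall a b : V, C a -> C b -> rho (a + b) -> rho a /\ rho b.

End Defs.

(* Write L = K^c; then K = L^c, and K lies in a ball B(z, r) with r < 1.  For y in L,
   call a unit vector h a contact direction at y if y - h lies in K.  Two facts carry
   the proof.  First, if a unit ball contains the points y - h_i, it also contains
   y - c/|c| for every nonzero conic combination c of the h_i: for a unit vector h the
   condition |w - (y - h)| <= 1 is a half-space condition on h, and normalising only
   pushes c deeper into that half-space.  Second, since r < 1 all contact directions
   at y lie in the open half-space <h, y - z> > 0, so they span a closed cone, and a
   separation argument shows that every outer normal of L at y lies in that cone.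
   If R^+u is an extremal ray of the normal cone, a conic combination of contact
   directions equal to u can only use u itself, so y - u is in K; the same argument
   with {q1, q2} in place of K shows that y - u in conv_c {q1, q2} forces y - u to be
   q1 or q2.  Conversely, for a c-extremal x let y be a point of L farthest from x.
   Then |y - x| = 1, since otherwise x is the midpoint of a small segment in K, and
   u = y - x is a contact direction.  If a multiple of u were a combination of contact
   directions involving some h <> u, the first fact would put x in conv_c of y - h and
   of another point of K. *)

From HB Require Import structures.
From mathcomp Require Import all_boot all_order all_algebra.
From mathcomp Require Import all_classical all_reals all_analysis.
From mathcomp Require Import ring lra zify.
Import Order.TTheory GRing.Theory Num.Theory.
Import numFieldTopology.Exports.
Set Implicit Arguments.
Unset Strict Implicit.
Unset Printing Implicit Defensive.
Local Open Scope classical_set_scope.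
Local Open Scope ring_scope.

Section Euclidean.
Variables (R : realType) (n : nat).
Notation V := 'rV[R]_n.
Implicit Types u v w : V.

Definition enorm2 u := edot u u.

Lemma edotC u v : edot u v = edot v u.
Proof. by apply: eq_bigr => i _; rewrite mulrC. Qed.

Lemma edotDl u v w : edot (u + v) w = edot u w + edot v w.
Proof. by rewrite /edot -big_split; apply: eq_bigr => i _; rewrite mxE mulrDl. Qed.

Lemma edotDr u v w : edot w (u + v) = edot w u + edot w v.
Proof. by rewrite edotC edotDl !(edotC w). Qed.

Lemma edotZl a u v : edot (a *: u) v = a * edot u v.
Proof. by rewrite /edot mulr_sumr; apply: eq_bigr => i _; rewrite mxE mulrA. Qed.

Lemma edotZr a u v : edot v (a *: u) = a * edot v u.
Proof. by rewrite edotC edotZl edotC. Qed.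

Lemma edotNl u v : edot (- u) v = - edot u v.
Proof. by rewrite -scaleN1r edotZl mulN1r. Qed.

Lemma edotNr u v : edot v (- u) = - edot v u.
Proof. by rewrite edotC edotNl edotC. Qed.

Lemma edotBl u v w : edot (u - v) w = edot u w - edot v w.
Proof. by rewrite edotDl edotNl. Qed.

Lemma edotBr u v w : edot w (u - v) = edot w u - edot w v.
Proof. by rewrite edotDr edotNr. Qed.

Lemma edot0l u : edot 0 u = 0.
Proof. by rewrite /edot big1 // => i _; rewrite mxE mul0r. Qed.

Lemma edot_suml (I : Type) (s : seq I) (F : I -> V) v :
  edot (\sum_(i <- s) F i) v = \sum_(i <- s) edot (F i) v.
Proof.
elim: s => [|a s IH]; first by rewrite !big_nil edot0l.
by rewrite !big_cons edotDl IH.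
Qed.

Lemma enorm2_ge0 u : 0 <= enorm2 u.
Proof. by rewrite /enorm2 /edot sumr_ge0 // => i _; rewrite -expr2 sqr_ge0. Qed.

Lemma enorm2_eq0 u : (enorm2 u == 0) = (u == 0).
Proof.
apply/idP/eqP => [|->]; last by rewrite /enorm2 edot0l.
rewrite /enorm2 /edot psumr_eq0 => [/allP u0|i _]; last by rewrite -expr2 sqr_ge0.
apply/rowP => i; have /u0 : i \in index_enum 'I_n by rewrite mem_index_enum.
by rewrite /= mulf_eq0 orbb mxE => /eqP.
Qed.

Lemma enorm20 : enorm2 (0 : V) = 0.
Proof. by apply/eqP; rewrite enorm2_eq0. Qed.

Lemma enorm2D u v : enorm2 (u + v) = enorm2 u + 2 * edot u v + enorm2 v.
Proof. rewrite /enorm2 !edotDl !edotDr (edotC v u); ring. Qed.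

Lemma enorm2B u v : enorm2 (u - v) = enorm2 u - 2 * edot u v + enorm2 v.
Proof. rewrite /enorm2 !edotBl !edotBr (edotC v u); ring. Qed.

Lemma enorm2Z a u : enorm2 (a *: u) = a ^+ 2 * enorm2 u.
Proof. rewrite /enorm2 edotZl edotZr; ring. Qed.

Lemma enorm2N u : enorm2 (- u) = enorm2 u.
Proof. by rewrite /enorm2 edotNl edotNr opprK. Qed.

Lemma enorm2_distC u v : enorm2 (u - v) = enorm2 (v - u).
Proof. by rewrite -enorm2N opprB. Qed.

Lemma edot_le_enorm2 u v : 2 * edot u v <= enorm2 u + enorm2 v.
Proof. have := enorm2_ge0 (u - v); rewrite enorm2B; lra. Qed.

Lemma parallelogram u v : enorm2 (u - v) + enorm2 (u + v) = 2 * enorm2 u + 2 * enorm2 v.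
Proof. rewrite enorm2B enorm2D; ring. Qed.

Lemma cauchy_schwarz u v : edot u v ^+ 2 <= enorm2 u * enorm2 v.
Proof.
have [u0|u0] := eqVneq u 0; first by rewrite u0 edot0l enorm20 expr0n mul0r.
have pu : 0 < enorm2 u by rewrite lt_neqAle eq_sym enorm2_eq0 u0 enorm2_ge0.
have := enorm2_ge0 (v - (edot u v / enorm2 u) *: u).
rewrite enorm2B enorm2Z edotZr (edotC v u) => H.
have -> : edot u v ^+ 2 = enorm2 u * enorm2 v - enorm2 u *
    (enorm2 v - 2 * (edot u v / enorm2 u * edot u v) + (edot u v / enorm2 u) ^+ 2 * enorm2 u).
  by field; exact: lt0r_neq0.
by rewrite gerBl mulr_ge0 // ltW.
Qed.

Lemma enorm_ge0 u : 0 <= enorm u.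
Proof. exact: sqrtr_ge0. Qed.

Lemma enorm_sqr u : enorm u ^+ 2 = enorm2 u.
Proof. by rewrite /enorm sqr_sqrtr // enorm2_ge0. Qed.

Lemma enorm_le u r : 0 <= r -> (enorm u <= r) = (enorm2 u <= r ^+ 2).
Proof. by move=> r0; rewrite -enorm_sqr ler_sqr // nnegrE enorm_ge0. Qed.

Lemma enorm_le1 u : (enorm u <= 1) = (enorm2 u <= 1).
Proof. by rewrite enorm_le // expr1n. Qed.

Lemma enorm_eq1 u : (enorm u = 1) <-> (enorm2 u = 1).
Proof.
split => H; first by rewrite -enorm_sqr H expr1n.
by rewrite /enorm -/(enorm2 u) H sqrtr1.
Qed.

Lemma enorm_eq0 u : (enorm u == 0) = (u == 0).
Proof. by rewrite /enorm sqrtr_eq0 le_eqVlt ltNge enorm2_ge0 orbF enorm2_eq0. Qed.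

Lemma enorm_gt0 u : u != 0 -> 0 < enorm u.
Proof. by rewrite -enorm_eq0 lt_neqAle eq_sym enorm_ge0 andbT. Qed.

Lemma edot_le_enorm u v : edot u v <= enorm u * enorm v.
Proof.
have [h|h] := lerP (edot u v) 0; first by rewrite (le_trans h) ?mulr_ge0 ?enorm_ge0.
rewrite -ler_sqr ?nnegrE ?(ltW h) ?mulr_ge0 ?enorm_ge0 //.
by rewrite exprMn !enorm_sqr cauchy_schwarz.
Qed.

Lemma enormD u v : enorm (u + v) <= enorm u + enorm v.
Proof.
rewrite -ler_sqr ?nnegrE ?addr_ge0 ?enorm_ge0 // enorm_sqr enorm2D sqrrD !enorm_sqr.
have := edot_le_enorm u v; lra.
Qed.

Lemma enormZ a u : enorm (a *: u) = `|a| * enorm u.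
Proof. by rewrite /enorm -/(enorm2 _) enorm2Z sqrtrM ?sqr_ge0 // sqrtr_sqr. Qed.

Lemma enormN u : enorm (- u) = enorm u.
Proof. by rewrite /enorm -!/(enorm2 _) enorm2N. Qed.

Lemma enorm0 : enorm (0 : V) = 0.
Proof. by apply/eqP; rewrite enorm_eq0. Qed.

Definition normalize u := (enorm u)^-1 *: u.

Lemma enorm2_normalize u : u != 0 -> enorm2 (normalize u) = 1.
Proof.
move=> /enorm_gt0 u0; rewrite /normalize enorm2Z -enorm_sqr.
by field; exact: lt0r_neq0.
Qed.

Lemma normalizeK u : enorm u *: normalize u = u.
Proof.
have [->|/enorm_gt0/lt0r_neq0 u0] := eqVneq u 0; first by rewrite enorm0 scale0r.
by rewrite /normalize scalerA mulfV ?scale1r.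
Qed.

Lemma normalizeZ t u : 0 < t -> enorm2 u = 1 -> normalize (t *: u) = u.
Proof.
move=> t0 /enorm_eq1 u1; rewrite /normalize enormZ gtr0_norm // u1 mulr1.
by rewrite scalerA mulVf ?scale1r // lt0r_neq0.
Qed.

Lemma unit_vector_exists : (0 < n)%N -> exists e : V, enorm2 e = 1.
Proof.
move=> n0; exists (delta_mx 0 (Ordinal n0)).
rewrite /enorm2 /edot (bigD1 (Ordinal n0)) //= big1 ?addr0 => [|j /negbTE jn].
  by rewrite !mxE !eqxx mulr1.
by rewrite !mxE jn andbF mulr0.
Qed.

Lemma unit_ray_eq (a t : R) u v : a *: u != 0 -> 0 <= a -> 0 <= t ->
  a *: u = t *: v -> enorm2 u = 1 -> enorm2 v = 1 -> u = v.
Proof.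
move=> au0 a0 t0 E u1 v1.
have a_neq0 : a != 0 by apply: contraNneq au0 => ->; rewrite scale0r.
have : enorm2 (a *: u) = enorm2 (t *: v) by rewrite E.
rewrite !enorm2Z u1 v1 !mulr1 => /eqP; rewrite eqrXn2 // => /eqP at_eq.
by move: E; rewrite at_eq => /scalerI; apply; rewrite -at_eq.
Qed.

End Euclidean.

Section ConicCombinations.
Variables (R : realType) (n : nat).
Notation V := 'rV[R]_n.
Implicit Types (u v w y : V) (P Q : set V) (s : seq (R * V)).

Definition ccomb s : V := \sum_(x <- s) x.1 *: x.2.
Definition conic_on P s := forall x, x \in s -> 0 <= x.1 /\ P x.2.
Definition cone_hull P : set V := [set v | exists2 s, conic_on P s & ccomb s = v].

Lemma ccomb_nil : ccomb [::] = 0.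
Proof. by rewrite /ccomb big_nil. Qed.

Lemma ccomb_cons x s : ccomb (x :: s) = x.1 *: x.2 + ccomb s.
Proof. by rewrite /ccomb big_cons. Qed.

Lemma ccomb_cat s1 s2 : ccomb (s1 ++ s2) = ccomb s1 + ccomb s2.
Proof. by rewrite /ccomb big_cat. Qed.

Lemma ccomb_rem x s : x \in s -> ccomb s = x.1 *: x.2 + ccomb (rem x s).
Proof. by move=> xs; rewrite /ccomb (perm_big _ (perm_to_rem xs)) big_cons. Qed.

Lemma edot_ccomb s w : edot (ccomb s) w = \sum_(x <- s) x.1 * edot x.2 w.
Proof. by rewrite /ccomb edot_suml; apply: eq_bigr => x _; rewrite edotZl. Qed.

Lemma conic_on_cons P x s :
  conic_on P (x :: s) <-> [/\ 0 <= x.1, P x.2 & conic_on P s].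
Proof.
split=> [Hs|[x0 Px Hs] y]; last by rewrite inE => /orP[/eqP->|/Hs].
have [x0 Px] := Hs x (mem_head _ _).
by split=> // y ys; apply: Hs; rewrite inE ys orbT.
Qed.

Lemma conic_on_cat P s1 s2 : conic_on P s1 -> conic_on P s2 -> conic_on P (s1 ++ s2).
Proof. by move=> H1 H2 x; rewrite mem_cat => /orP[/H1|/H2]. Qed.

Lemma conic_on_rem P x s : conic_on P s -> conic_on P (rem x s).
Proof. by move=> H y /mem_rem /H. Qed.

Lemma conic_onS P Q s : P `<=` Q -> conic_on P s -> conic_on Q s.
Proof. by move=> PQ H x /H [x0 /PQ]. Qed.

Lemma cone_hull_sub P : P `<=` cone_hull P.
Proof.
move=> h Ph; exists [:: (1, h)]; last by rewrite ccomb_cons ccomb_nil scale1r addr0.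
by apply/conic_on_cons; split.
Qed.

Lemma cone_hullD P u v : cone_hull P u -> cone_hull P v -> cone_hull P (u + v).
Proof.
move=> [s1 H1 <-] [s2 H2 <-].
by exists (s1 ++ s2); [exact: conic_on_cat | rewrite ccomb_cat].
Qed.

Lemma cone_hullZ P a v : 0 <= a -> cone_hull P v -> cone_hull P (a *: v).
Proof.
move=> a0 [s Hs <-]; exists [seq (a * x.1, x.2) | x <- s].
  by move=> _ /mapP[x /Hs[x0 Px] ->]; split=> //=; rewrite mulr_ge0.
rewrite /ccomb big_map scaler_sumr; apply: eq_bigr => x _.
by rewrite scalerA.
Qed.

Lemma enorm_ccomb_le P s : conic_on P s ->
  enorm (ccomb s) <= \sum_(x <- s) x.1 * enorm x.2.
Proof.
elim: s => [|x s IH]; first by rewrite ccomb_nil big_nil enorm0.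
move=> /conic_on_cons[x0 _ Hs]; rewrite ccomb_cons big_cons.
by rewrite (le_trans (enormD _ _)) // enormZ ger0_norm // lerD // IH.
Qed.

Lemma ccomb_neq0_term s : ccomb s != 0 -> exists2 x, x \in s & x.1 *: x.2 != 0.
Proof.
elim: s => [|x s IH]; first by rewrite ccomb_nil eqxx.
rewrite ccomb_cons; have [->|x0 _] := eqVneq (x.1 *: x.2) 0.
  by rewrite add0r => /IH[y ys y0]; exists y; rewrite // inE ys orbT.
by exists x; rewrite ?mem_head.
Qed.

Lemma pos_ray_ccomb u s :
  (forall x, x \in s -> pos_ray u (x.1 *: x.2)) -> pos_ray u (ccomb s).
Proof.
elim: s => [|x s IH] Hs; first by exists 0; rewrite ccomb_nil scale0r.
rewrite ccomb_cons; have [a [a0 ->]] := Hs x (mem_head _ _).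
have [b [b0 ->]] : pos_ray u (ccomb s).
  by apply: IH => y ys; apply: Hs; rewrite inE ys orbT.
by exists (a + b); rewrite scalerDl addr_ge0.
Qed.

Lemma conic_coef_le P s w0 (c0 : R) x : 0 <= c0 ->
  (forall h, P h -> c0 <= edot h w0) -> conic_on P s -> x \in s ->
  x.1 * c0 <= edot (ccomb s) w0.
Proof.
move=> c00 Pw Hs xs; rewrite (ccomb_rem xs) edotDl edotZl.
have [x0 /Pw Px] := Hs x xs.
rewrite -[leLHS]addr0 lerD ?ler_wpM2l // edot_ccomb big_seq sumr_ge0 // => y /mem_rem ys.
by have [y0 /Pw Py] := Hs y ys; rewrite mulr_ge0 // (le_trans c00).
Qed.

Lemma unit_ball_halfspace y w h : enorm2 h = 1 ->
  (enorm2 (w - (y - h)) <= 1) = (2 * edot h (w - y) + enorm2 (w - y) <= 0).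
Proof.
move=> h1; have -> : w - (y - h) = (w - y) + h by rewrite opprB addrA addrAC.
rewrite enorm2D h1 (edotC (w - y)); apply/idP/idP; lra.
Qed.

Lemma ball_normalize_ccomb y w s :
  conic_on (fun h => enorm2 h = 1 /\ enorm2 (w - (y - h)) <= 1) s -> ccomb s != 0 ->
  enorm2 (w - (y - normalize (ccomb s))) <= 1.
Proof.
move=> Hs c0; rewrite unit_ball_halfspace ?enorm2_normalize //.
set e := w - y; set c := ccomb s; have cp := enorm_gt0 c0.
have c_le : enorm c <= \sum_(x <- s) x.1.
  apply: le_trans (enorm_ccomb_le Hs) _; rewrite big_seq [leRHS]big_seq.
  by apply: ler_sum => x /Hs[_ [/enorm_eq1 -> _]]; rewrite mulr1.
have ce : 2 * edot c e <= - (\sum_(x <- s) x.1) * enorm2 e.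
  rewrite edot_ccomb mulr_sumr mulNr mulr_suml -sumrN !big_seq ler_sum // => x xs.
  have [x0 [x1]] := Hs x xs; rewrite unit_ball_halfspace // -/e => xe.
  by rewrite mulrCA -mulrN ler_wpM2l //; lra.
have ce' : 2 * edot c e <= - enorm c * enorm2 e.
  by rewrite (le_trans ce) // ler_wpM2r ?enorm2_ge0 // lerN2.
have ic : 0 <= (enorm c)^-1 by rewrite invr_ge0 ltW.
have := ler_wpM2l ic ce'.
have -> : (enorm c)^-1 * (- enorm c * enorm2 e) = - enorm2 e by field; exact: lt0r_neq0.
rewrite /normalize edotZl mulrCA; lra.
Qed.

End ConicCombinations.

Section Caratheodory.
Variables (R : realType) (n : nat).
Notation V := 'rV[R]_n.

Lemma lin_rel_pos_coef (m : nat) (h : 'I_m -> V) : (n < m)%N ->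
  exists2 nu : 'I_m -> R, exists i, 0 < nu i & \sum_i nu i *: h i = 0.
Proof.
move=> nm; pose H : 'M[R]_(m, n) := \matrix_(i, j) h i 0 j.
have [i0 ker_i0|ker0] := pickP (fun i => row i (kermx H) != 0); last first.
  have : kermx H != 0.
    by rewrite -mxrank_eq0 -lt0n mxrank_ker; have := rank_leq_col H; lia.
  by case/negP; apply/eqP/row_matrixP => i; rewrite row0; apply/eqP/negbFE/ker0.
set mu := row i0 (kermx H) in ker_i0.
have muH : mu *m H = 0 by rewrite /mu -row_mul mulmx_ker row0.
have mu_rel : \sum_i mu 0 i *: h i = 0.
  apply: etrans muH; rewrite mulmx_sum_row; apply: eq_bigr => i _.
  by congr (_ *: _); apply/rowP => j; rewrite !mxE.
have [j muj] : exists j, mu 0 j != 0.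
  apply/existsP; apply: contraTT ker_i0 => /existsPn mu0; rewrite negbK.
  by apply/eqP/rowP => j; rewrite [RHS]mxE; exact/eqP/negbNE/mu0.
have [mu_pos|mu_neg] := ltrP 0 (mu 0 j); first by exists (mu 0); first by exists j.
exists (fun i => - mu 0 i); first by exists j; rewrite oppr_gt0 lt_neqAle muj.
under eq_bigr do rewrite scaleNr.
by rewrite sumrN mu_rel oppr0.
Qed.

Lemma caratheodory_step (P : set V) s : (n < size s)%N -> conic_on P s ->
  exists s', [/\ conic_on P s', (size s' < size s)%N & ccomb s' = ccomb s].
Proof.
move=> ns Hs; set m := size s in ns *.
pose lam (i : 'I_m) := (nth (0, 0) s i).1.
pose h (i : 'I_m) := (nth (0, 0) s i).2.
have Hnth (i : 'I_m) : 0 <= lam i /\ P (h i) by apply/Hs/mem_nth.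
have [nu [i1 nu1] nu_rel] := lin_rel_pos_coef h ns.
(* Subtract the largest multiple of the relation that keeps all coefficients nonnegative. *)
have [k nuk k_min] := @arg_minP _ _ _ i1 (fun i => 0 < nu i) (fun i => lam i / nu i) nu1.
set th := lam k / nu k.
pose s2 := [seq (lam i - th * nu i, h i) | i <- enum 'I_m].
have s2_comb : ccomb s2 = ccomb s.
  rewrite /ccomb big_map big_enum /= [RHS](big_nth (0, 0)) big_mkord.
  under eq_bigr do rewrite scalerBl -scalerA.
  by rewrite sumrB -scaler_sumr nu_rel scaler0 subr0.
have s2_conic : conic_on P s2.
  move=> _ /mapP[i _ ->] /=; have [l0 Ph] := Hnth i; split=> //; rewrite subr_ge0.
  have [nup|nun] := ltrP 0 (nu i); first by rewrite -ler_pdivlMr // k_min.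
  by rewrite (le_trans _ l0) // mulr_ge0_le0 // divr_ge0 ?(Hnth k).1 ?ltW.
exists [seq x <- s2 | x.1 != 0]; split.
- by move=> x; rewrite mem_filter => /andP[_ /s2_conic].
- have sz2 : size s2 = m by rewrite size_map size_enum_ord.
  rewrite size_filter -[X in (_ < X)%N]sz2 -(count_predC (fun x => x.1 != 0) s2).
  rewrite -[X in (X < _)%N]addn0 ltn_add2l -has_count; apply/hasP.
  exists (lam k - th * nu k, h k).
    by apply/mapP; exists k; rewrite ?mem_enum.
  by rewrite /= negbK /th divfK ?subrr // lt0r_neq0.
- rewrite -s2_comb /ccomb big_filter big_mkcond /=; apply: eq_bigr => x _.
  by case: ifPn => // /negPn/eqP ->; rewrite scale0r.
Qed.

Lemma caratheodory (P : set V) s : conic_on P s ->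
  exists s', [/\ conic_on P s', (size s' <= n)%N & ccomb s' = ccomb s].
Proof.
move: {2}(size s) (leqnn (size s)) => k; elim: k s => [|k IH] s sk Hs.
  by exists s; split=> //; apply: leq_trans sk _.
have [sn|ns] := leqP (size s) n; first by exists s.
have [s1 [H1 sz1 <-]] := caratheodory_step ns Hs.
exact: IH (leq_trans sz1 sk) H1.
Qed.

End Caratheodory.

Section Topology.
Variables (R : realType) (n : nat).
Notation V := 'rV[R]_n.
Implicit Types (u v w y z : V) (A : set V).

Lemma edot_continuous (T : topologicalType) (f g : T -> V) :
  continuous f -> continuous g -> continuous (fun x => edot (f x) (g x)).
Proof.
move=> fc gc; rewrite /edot; apply: (continuous_big (@add_continuous R^o)) => i _ x.
have coord (h : T -> V) : continuous h -> {for x, continuous (fun x => h x 0 i)}.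
  by move=> hc; exact: continuous_comp (hc x) (@coord_continuous R 1 n 0 i (h x)).
exact: continuousM (coord _ fc) (coord _ gc).
Qed.

Lemma enorm2_dist_continuous a : continuous (fun w : V => enorm2 (w - a)).
Proof.
have subc : continuous (fun w : V => w - a).
  by move=> x; apply: continuousB; [exact: cvg_id | exact: cst_continuous].
exact: edot_continuous.
Qed.

Lemma continuous_subl y : continuous (fun p : V => y - p).
Proof. by move=> p; apply: continuousB; [exact: cst_continuous | exact: cvg_id]. Qed.

Lemma closed_enorm2_dist (S : set R) (a : V) :
  closed S -> closed [set w | S (enorm2 (w - a))].
Proof.
move=> cS; apply: (@preimage_closed _ _ (fun w : V => enorm2 (w - a)) S _ cS) => x _.
exact: enorm2_dist_continuous.
Qed.

Lemma in_cdual A w : cdual A w <-> forall a, A a -> enorm2 (w - a) <= 1.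
Proof. by split=> H a /H; rewrite /eball /= enorm_le1. Qed.

Lemma cdual_closed A : closed (cdual A).
Proof.
apply: closed_bigI => a _; have -> : eball a 1 = [set w | enorm2 (w - a) <= 1].
  by apply/seteqP; split=> w; rewrite /eball /= enorm_le1.
exact: closed_enorm2_dist a (@closed_le R 1).
Qed.

Lemma mx_norm_le_enorm u : `|u| <= enorm u.
Proof.
rewrite [leLHS]mx_normrE; apply: bigmax_le => [|[i j] _ /=]; first exact: enorm_ge0.
rewrite ord1 -ler_sqr ?nnegrE ?enorm_ge0 // enorm_sqr real_normK ?num_real //.
rewrite /enorm2 /edot (bigD1 j) //= -expr2 lerDl sumr_ge0 // => k _.
by rewrite -expr2 sqr_ge0.
Qed.

Lemma compact_enorm_bounded A z (r : R) : closed A ->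
  (forall x, A x -> enorm (x - z) <= r) -> compact A.
Proof.
move=> cA Ar; apply: bounded_closed_compact => //.
exists (r + `|z|); split; first exact: num_real.
move=> M /ltW rM x Ax; apply: le_trans rM; rewrite -[x](subrK z).
by rewrite (le_trans (ler_normD _ _)) // lerD2r (le_trans (mx_norm_le_enorm _)) ?Ar.
Qed.

Lemma interior_shift A y g : (A°) y -> exists2 s : R, 0 < s & A (y + s *: g).
Proof.
move=> /nbhs_ballP[e e0 Ae]; have g1 : 0 < enorm g + 1 by have := enorm_ge0 g; lra.
exists (e / (2 * (enorm g + 1))); first by rewrite divr_gt0 // mulr_gt0.
apply: Ae; rewrite -ball_normE /ball_ /= opprD addrA subrr add0r normrN.
rewrite (le_lt_trans (mx_norm_le_enorm _)) // enormZ gtr0_norm ?divr_gt0 ?mulr_gt0 //.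
rewrite mulrAC ltr_pdivrMr ?mulr_gt0 // ltr_pM2l //; have := enorm_ge0 g; lra.
Qed.

End Topology.

Section CDuality.
Variables (R : realType) (n : nat).
Notation V := 'rV[R]_n.
Implicit Types (u v w x y h : V) (A B : set V) (s : seq (R * V)).

Definition extremal_normal_points (T : set V) : set V :=
  [set x | exists y u, bdry T y /\ unit_normals T y u /\
                       extremal_ray (pos_cone (unit_normals T y)) (pos_ray u) /\ x = y - u].

Lemma extremal_normal_points_bdry0 (T : set V) :
  bdry T = set0 -> extremal_normal_points T = set0.
Proof. by move=> T0; apply/seteqP; split=> // x [y [u [+ _]]]; rewrite T0. Qed.

Lemma cdualS A B : A `<=` B -> cdual B `<=` cdual A.
Proof. by move=> AB w /in_cdual Bw; apply/in_cdual => a /AB; exact: Bw. Qed.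

Lemma sub_cdual2 A : A `<=` cdual (cdual A).
Proof. by move=> a Aa; apply/in_cdual => w /in_cdual /(_ a Aa); rewrite enorm2_distC. Qed.

Lemma cdual3 A : cdual (cdual (cdual A)) = cdual A.
Proof. by apply/seteqP; split; [apply: cdualS; exact: sub_cdual2 | exact: sub_cdual2]. Qed.

Lemma bdry_cdual A y : bdry (cdual A) y -> cdual A y.
Proof. by move=> [+ _]; have /closure_id <- := @cdual_closed R n A. Qed.

Lemma ball_edot_le0 y w h :
  enorm2 h = 1 -> enorm2 (w - (y - h)) <= 1 -> edot h (w - y) <= 0.
Proof. by move=> h1; rewrite unit_ball_halfspace // => H; have := enorm2_ge0 (w - y); lra. Qed.

Lemma conv_c_normalize2 y h h' (a b : R) : enorm2 h = 1 -> enorm2 h' = 1 ->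
  0 <= a -> 0 <= b -> a *: h + b *: h' != 0 ->
  conv_c [set y - h; y - h'] (y - normalize (a *: h + b *: h')).
Proof.
move=> h1 h1' a0 b0 c0; apply/in_cdual => w /in_cdual Hw; rewrite enorm2_distC.
have -> : a *: h + b *: h' = ccomb [:: (a, h); (b, h')].
  by rewrite !ccomb_cons ccomb_nil addr0.
apply: ball_normalize_ccomb; last by rewrite !ccomb_cons ccomb_nil addr0.
by move=> _ /[!inE] /orP[]/eqP-> /=; do 2 split=> //; apply: Hw; [left | right].
Qed.

Lemma conv_c_midpoint x v : conv_c [set x + v; x - v] x.
Proof.
apply/in_cdual => w /in_cdual Hw; rewrite enorm2_distC.
have := Hw (x + v) (or_introl erefl); have := Hw (x - v) (or_intror erefl).
have -> : w - (x + v) = w - x - v by rewrite opprD addrA.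
have -> : w - (x - v) = w - x + v by rewrite opprB addrA addrAC.
by have := parallelogram (w - x) v; have := enorm2_ge0 v; lra.
Qed.

Lemma ext_c_midpoint (K : set V) x v : ext_c K x -> K (x + v) -> K (x - v) -> v = 0.
Proof.
move=> [_ ext] Kxv Kxv'; case: (ext _ _ Kxv Kxv' (@conv_c_midpoint x v)) => E.
  by apply: (addrI x); rewrite addr0.
by apply/oppr_inj; rewrite oppr0; apply: (addrI x); rewrite addr0.
Qed.

Lemma extremal_ray_ccomb (C rho : set V) s : extremal_ray C rho ->
  (forall s', {subset s' <= s} -> C (ccomb s')) -> rho (ccomb s) ->
  forall a, a \in s -> rho (a.1 *: a.2).
Proof.
move=> [_ [_ face]]; elim: s => [//|a s IH] Cs; rewrite ccomb_cons => rho_as.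
have Ca : C (a.1 *: a.2).
  have := Cs [:: a]; rewrite ccomb_cons ccomb_nil addr0; apply=> b.
  by rewrite inE => /eqP->; rewrite mem_head.
have Cs' s' : {subset s' <= s} -> C (ccomb s').
  by move=> s's; apply: Cs => b /s's bs; rewrite inE bs orbT.
have [ra rs] := face _ _ Ca (Cs' s (fun _ => id)) rho_as.
by move=> b; rewrite inE => /orP[/eqP-> //|]; exact: IH.
Qed.

Lemma unit_ray_ccomb (P : set V) s u : (forall h, P h -> enorm2 h = 1) -> conic_on P s ->
  (forall a, a \in s -> pos_ray u (a.1 *: a.2)) -> ccomb s = u -> enorm2 u = 1 -> P u.
Proof.
move=> P1 Hs rays su u1.
have [a sa a0] : exists2 a, a \in s & a.1 *: a.2 != 0.
  by apply: ccomb_neq0_term; rewrite su -enorm2_eq0 u1 oner_neq0.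
have [t [t0 at_]] := rays a sa; have [a1 Pa] := Hs a sa.
by rewrite -(unit_ray_eq a0 a1 t0 at_ (P1 _ Pa) u1).
Qed.

End CDuality.

Section NearestPoint.
Variables (R : realType) (n : nat).
Notation V := 'rV[R]_n.
Implicit Types (u v w c h : V) (C : set V).

Lemma le0_of_le_small (a b : R) : 0 <= b ->
  (forall t, 0 < t -> t < 1 -> a <= t * b) -> a <= 0.
Proof.
move=> b0 H; apply/ler_addgt0Pr => e e0; rewrite add0r.
pose t := Num.min 2^-1 (e / (b + 1)); have b1 : 0 < b + 1 by lra.
have t0 : 0 < t by rewrite lt_min invr_gt0 ltr0n divr_gt0.
have t1 : t < 1 by rewrite gt_min invf_lt1 ?ltr1n ?ltr0n.
have : t * (b + 1) <= e by rewrite -ler_pdivlMr // ge_min lexx orbT.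
by have := H t t0 t1; nra.
Qed.

Lemma nearest_edot_le0 C v c h : C c ->
  (forall c', C c' -> enorm2 (c - v) <= enorm2 (c' - v)) ->
  (forall t, 0 < t -> t < 1 -> C (c + t *: h)) -> edot (v - c) h <= 0.
Proof.
move=> Cc c_min Ch; suff : 2 * edot (v - c) h <= 0 by lra.
apply: (le0_of_le_small (enorm2_ge0 h)) => t t0 t1.
have := c_min _ (Ch t t0 t1).
have -> : c + t *: h - v = t *: h - (v - c) by rewrite opprB [RHS]addrC addrAC.
rewrite (enorm2_distC c) (enorm2B (t *: h)) enorm2Z edotZl (edotC h) => le_d.
by rewrite -(ler_pM2l t0); nra.
Qed.

Definition convex_cone C :=
  (forall a b, C a -> C b -> C (a + b)) /\ (forall t a, 0 <= t -> C a -> C (t *: a)).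

Lemma nearest_cone_separates C v c : convex_cone C -> C c ->
  (forall c', C c' -> enorm2 (c - v) <= enorm2 (c' - v)) -> ~ C v ->
  (forall h, C h -> edot (v - c) h <= 0) /\ 0 < edot (v - c) v.
Proof.
move=> [CD CZ] Cc c_min Cv; have d0 : v - c != 0 by apply: contra_not_neq Cv => /subr0_eq ->.
have dir h : C h -> edot (v - c) h <= 0.
  by move=> Ch; apply: (nearest_edot_le0 Cc c_min) => t t0 _; apply/CD/CZ/Ch/ltW.
split=> //; have : edot (v - c) (- c) <= 0.
  apply: (nearest_edot_le0 Cc c_min) => t t0 t1.
  have -> : c + t *: - c = (1 - t) *: c by rewrite scalerBl scale1r scalerN.
  by apply: CZ Cc; lra.
have : 0 < enorm2 (v - c) by rewrite lt_neqAle eq_sym enorm2_eq0 d0 enorm2_ge0.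
have -> : edot (v - c) v = enorm2 (v - c) + edot (v - c) c by rewrite -edotDr subrK.
rewrite edotNr; lra.
Qed.

End NearestPoint.

Section ConeHullClosed.
Variables (R : realType) (n : nat).
Notation V := 'rV[R]_n.
Notation coefs := (prod_topology (fun _ : 'I_n => (R * V)%type)).
Implicit Types (v c h : V) (s : seq (R * V)).

Definition comb_fun (f : coefs) : V := \sum_i (f i).1 *: (f i).2.

Lemma comb_fun_continuous : continuous comb_fun.
Proof.
apply: (continuous_big add_continuous) => i _ f.
have p := @proj_continuous 'I_n (fun _ => (R * V)%type) i f.
have fst_i : {for f, continuous (fun f : coefs => (f i).1)}.
  by apply: continuous_comp p _; exact: cvg_fst.
have snd_i : {for f, continuous (fun f : coefs => (f i).2)}.
  by apply: continuous_comp p _; exact: cvg_snd.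
exact: continuousZ fst_i snd_i.
Qed.

Lemma comb_fun_nth s : (size s <= n)%N -> comb_fun (fun i => nth (0, 0) s i) = ccomb s.
Proof.
move=> sn; rewrite /comb_fun /ccomb (big_nth (0, 0)) big_mkord.
rewrite (big_ord_widen n (fun i => (nth (0, 0) s i).1 *: (nth (0, 0) s i).2) sn).
rewrite [RHS]big_mkcond; apply: eq_bigr => i _.
by case: ltnP => // si; rewrite nth_default ?scale0r.
Qed.

Variables (G : set V) (w0 : V) (c0 : R).
Hypotheses (cG : compact G) (c0_gt0 : 0 < c0) (G_w0 : forall h, G h -> c0 <= edot h w0).

Lemma cone_hull_comb_fun (f : coefs) :
  (forall i, 0 <= (f i).1 /\ (G `|` [set 0]) (f i).2) -> cone_hull G (comb_fun f).
Proof.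
move=> Hf; exists [seq f i | i <- enum 'I_n & (f i).2 != 0].
  move=> x /mapP[i]; rewrite mem_filter => /andP[fi0 _] ->.
  by have [f0 [|/= fi0']] := Hf i; last by rewrite fi0' eqxx in fi0.
rewrite /ccomb big_map big_filter big_mkcond /= -[RHS]big_enum /=.
by apply: eq_bigr => i _; case: ifPn => // /negPn/eqP ->; rewrite scaler0.
Qed.

(* A combination [c] with [|c - v| <= |v|] has [|c|^2 <= 4 |v|^2], and each of its
   coefficients [a] satisfies [a c0 <= <c, w0> <= (|c|^2 + |w0|^2) / 2]. *)
Let coef_bound v := (4 * enorm2 v + enorm2 w0) / (2 * c0).
Let near_ball v := [set c : V | enorm2 (c - v) <= enorm2 v].
Let coef_box v := [set f : coefs | forall i, (`[0, coef_bound v] `*` (G `|` [set 0])) (f i)].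

Lemma conic_coef_bound v s x : conic_on G s -> x \in s -> near_ball v (ccomb s) ->
  x.1 <= coef_bound v.
Proof.
move=> Hs xs; rewrite /near_ball /= => near.
have c_le : enorm2 (ccomb s) <= 4 * enorm2 v.
  have -> : enorm2 (ccomb s) = enorm2 (ccomb s - v) + 2 * edot (ccomb s - v) v + enorm2 v.
    by rewrite -enorm2D subrK.
  by have := edot_le_enorm2 (ccomb s - v) v; lra.
have := conic_coef_le (ltW c0_gt0) G_w0 Hs xs; have := edot_le_enorm2 (ccomb s) w0.
rewrite /coef_bound ler_pdivlMr ?mulr_gt0 //; lra.
Qed.

(* Caratheodory and [conic_coef_bound] make this part of the cone a continuous image of
   a compact box. *)
Lemma cone_hull_near_ball v : cone_hull G `&` near_ball v = comb_fun @` coef_box v `&` near_ball v.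
Proof.
apply/seteqP; split=> c [Cc near]; split=> //; last first.
  case: Cc => f Hf <-; apply: cone_hull_comb_fun => i.
  by have [/= + ?] := Hf i; rewrite in_itv /= => /andP[].
case: Cc near => s0 /caratheodory[s [Hs sn <-]] <- near.
exists (fun i => nth (0, 0) s i); last exact: comb_fun_nth sn.
move=> i /=; have [si|si] := ltnP i (size s); last first.
  rewrite nth_default //=; split; last by right.
  by rewrite in_itv /= lexx divr_ge0 ?addr_ge0 ?mulr_ge0 ?enorm2_ge0 ?ltW.
have [x0 Gx] := Hs _ (mem_nth (0, 0) si); split; last by left.
by rewrite /= in_itv /= x0 (conic_coef_bound Hs) // mem_nth.
Qed.

Lemma cone_hull_nearest v : exists2 c, cone_hull G c &
  forall c', cone_hull G c' -> enorm2 (c - v) <= enorm2 (c' - v).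
Proof.
have c_box : compact (coef_box v).
  have c_fac : compact (`[0, coef_bound v] `*` (G `|` [set 0])).
    by apply: compact_setX; [exact: segment_compact | exact/compactU/compact_set1].
  exact: (@tychonoff 'I_n (fun _ => (R * V)%type) _ (fun _ => c_fac)).
have cK : compact (cone_hull G `&` near_ball v).
  rewrite cone_hull_near_ball; apply: compact_closedI.
    by apply: continuous_compact c_box; apply: continuous_subspaceT comb_fun_continuous.
  exact: closed_enorm2_dist v (@closed_le R _).
have K0 : (cone_hull G `&` near_ball v) 0.
  by split; [exists [::]; rewrite ?ccomb_nil | rewrite /near_ball /= sub0r enorm2N].
have [c] := compact_EVT_min (ex_intro _ _ K0) cK
  (continuous_subspaceT (@enorm2_dist_continuous R n v)).
rewrite inE => -[Cc near] c_min.
exists c => // c' Cc'; have [near'|far] := lerP (enorm2 (c' - v)) (enorm2 v).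
  by apply: c_min; rewrite inE.
exact: le_trans near (ltW far).
Qed.

Lemma cone_hull_separation v : ~ cone_hull G v ->
  exists d, (forall h, G h -> edot d h <= 0) /\ 0 < edot d v.
Proof.
move=> Cv; have [c Cc c_min] := cone_hull_nearest v.
have cone : convex_cone (cone_hull G) by split; [exact: cone_hullD | exact: cone_hullZ].
have [dG dv] := nearest_cone_separates cone Cc c_min Cv.
by exists (v - c); split=> // h /cone_hull_sub; exact: dG.
Qed.

End ConeHullClosed.

Lemma tilt_separator (R : realType) (n : nat) (G : set 'rV[R]_n) w0 (c0 : R) d v :
  0 < c0 -> (forall h, G h -> c0 <= edot h w0) ->
  (forall h, G h -> edot d h <= 0) -> 0 < edot d v ->
  exists d' (k : R), [/\ 0 < k, forall h, G h -> edot d' h <= - k & 0 < edot v d'].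
Proof.
move=> c0_gt0 G_w0 dG dv; set a := edot v w0.
have a1 : 0 < 2 * (`|a| + 1) by have := normr_ge0 a; lra.
pose eps := edot d v / (2 * (`|a| + 1)).
have eps0 : 0 < eps by rewrite divr_gt0.
have epsE : eps * (2 * (`|a| + 1)) = edot d v by rewrite divfK ?lt0r_neq0.
exists (d - eps *: w0), (eps * c0); split; first by rewrite mulr_gt0.
  move=> h Gh; rewrite edotBl edotZl (edotC w0).
  by have := dG h Gh; have := ler_wpM2l (ltW eps0) (G_w0 h Gh); lra.
rewrite edotBr edotZr -/a (edotC v d).
have : eps * a <= eps * `|a| by rewrite ler_wpM2l ?ler_norm // ltW.
by move: epsE; rewrite !mulrDr mulr1; lra.
Qed.

Section NormalCone.
Variables (R : realType) (n : nat).
Notation V := 'rV[R]_n.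
Implicit Types (u v w y h p d : V).

Definition contact (K : set V) y : set V := [set h | K (y - h) /\ enorm2 h = 1].

Variables (K : set V) (z : V) (r2 : R).
Hypotheses (cK : compact K) (r2_lt1 : r2 < 1) (K_z : forall p, K p -> enorm2 (p - z) <= r2).

Lemma contact_edot_ge y h : contact K y h -> (1 - r2) / 2 <= edot h (y - z).
Proof.
move=> [/K_z + h1]; have -> : y - h - z = (y - z) - h by rewrite addrAC.
rewrite enorm2B h1 (edotC (y - z)) ler_pdivrMr ?ltr0n //.
by have := enorm2_ge0 (y - z); lra.
Qed.

Lemma contact_compact y : compact (contact K y).
Proof.
have -> : contact K y = (fun p => y - p) @` (K `&` [set p | enorm2 (p - y) = 1]).
  apply/seteqP; split=> h.
    by move=> [Kp h1]; exists (y - h); rewrite /= ?subKr // enorm2_distC subKr.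
  by move=> [p [Kp /= p1] <-]; split; rewrite ?subKr // enorm2_distC.
apply: continuous_compact; last first.
  by apply: compact_closedI => //; exact: closed_enorm2_dist y (@closed_eq R _).
exact/continuous_subspaceT/continuous_subl.
Qed.

Section StepInward.
Variables (y d : V) (k : R).
Hypotheses (k_gt0 : 0 < k) (Ly : cdual K y)
  (d_contact : forall h, contact K y h -> edot d h <= - k).

Let K_near := K `&` [set p | - k / 2 <= edot d (y - p)].

Lemma near_points_bound : exists2 m, m < 1 & forall p, K_near p -> enorm2 (p - y) <= m.
Proof.
have /in_cdual Ly1 := Ly.
have lt1 p : K_near p -> enorm2 (p - y) < 1.
  move=> [Kp /= dp]; rewrite lt_neqAle enorm2_distC Ly1 // andbT.
  apply/eqP => p1; have /d_contact : contact K y (y - p) by split; rewrite ?subKr.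
  by move=> h; have := le_trans dp h; have := k_gt0; lra.
have [[p0 Kp0]|empty] := pselect (K_near !=set0); last first.
  by exists 0 => // p Kp; exfalso; apply: empty; exists p.
have c_near : compact K_near.
  apply: compact_closedI => //.
  apply: (@preimage_closed _ _ (fun p => edot d (y - p)) _ _ (@closed_ge R _)) => p _.
  by apply: edot_continuous; [exact: cst_continuous | exact: continuous_subl].
have [p1] := compact_EVT_max (ex_intro _ _ Kp0) c_near
  (continuous_subspaceT (@enorm2_dist_continuous R n y)).
rewrite inE => Kp1 p1_max; exists (enorm2 (p1 - y)); first exact: lt1.
by move=> p Kp; apply: p1_max; rewrite inE.
Qed.

(* Points of [K_near] are within distance [sqrt m < 1] of [y]; for the other points [p]
   of [K], moving [y] along [d] decreases [|y - p|^2] to first order, as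
   [<d, y - p> < -k/2]. *)
Lemma step_into_cdual : exists2 t : R, 0 < t & cdual K (y + t *: d).
Proof.
have [m m1 m_near] := near_points_bound; have /in_cdual Ly1 := Ly.
pose D := enorm2 d + 1; have D0 : 0 < D by have := enorm2_ge0 d; rewrite /D; lra.
pose t := Num.min (k / D) (Num.min ((1 - m) / (2 * D)) 1).
have t0 : 0 < t by rewrite !lt_min !divr_gt0 ?mulr_gt0 ?ltr0n ?ltr01 //; lra.
have t1 : t <= 1 by rewrite !ge_min lexx !orbT.
have tk : t * D <= k by rewrite -ler_pdivlMr // ge_min lexx.
have tm : 2 * t * D <= 1 - m.
  by rewrite -mulrA mulrCA -ler_pdivlMr ?mulr_gt0 ?ltr0n // !ge_min lexx orbT.
exists t => //; apply/in_cdual => p Kp.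
have -> : y + t *: d - p = (y - p) + t *: d by rewrite addrAC.
rewrite enorm2D edotZr enorm2Z.
have dt : t ^+ 2 * enorm2 d <= t * (t * D).
  by rewrite expr2 -mulrA !ler_wpM2l ?ltW // /D; lra.
have yp := Ly1 p Kp.
have [Np|Fp] := pselect (K_near p).
  have := m_near p Np; rewrite enorm2_distC => mp.
  have : t * (2 * edot (y - p) d) <= t * D.
    by rewrite ler_wpM2l ?ltW // /D; have := edot_le_enorm2 (y - p) d; lra.
  by have := ler_piMl (ltW (mulr_gt0 t0 D0)) t1; lra.
have dp : edot d (y - p) < - k / 2 by rewrite ltNge; apply/negP => dp; apply: Fp.
have : t * (2 * edot (y - p) d) <= t * (- k).
  by rewrite ler_wpM2l ?ltW // edotC; lra.
by have := ler_wpM2l (ltW t0) tk; lra.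
Qed.

End StepInward.

Lemma normal_in_contact_cone y v : cdual K y ->
  (forall w, cdual K w -> edot v (w - y) <= 0) -> cone_hull (contact K y) v.
Proof.
move=> Ly v_normal; apply: contrapT => v_out.
have c0 : 0 < (1 - r2) / 2 by rewrite divr_gt0 ?ltr0n // subr_gt0.
have [d [dG dv]] := cone_hull_separation (@contact_compact y) c0 (@contact_edot_ge y) v_out.
have [d' [k [k0 d'G vd']]] := tilt_separator c0 (@contact_edot_ge y) dG dv.
have [t t0 Lt] := step_into_cdual k0 Ly d'G.
have := v_normal _ Lt; rewrite addrAC subrr add0r edotZr.
by have := mulr_gt0 t0 vd'; lra.
Qed.

End NormalCone.

Section ExtremalPoints.
Variables (R : realType) (n : nat).
Notation V := 'rV[R]_n.
Implicit Types (u v w x y h g p : V) (s : seq (R * V)).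
Variables (K : set V) (z : V) (r2 : R).
Hypotheses (K_cc : cdual (cdual K) = K) (r2_lt1 : r2 < 1)
  (K_z : forall p, K p -> enorm2 (p - z) <= r2) (cK : compact K).
Local Notation L := (cdual K).
Local Notation N y := (pos_cone (unit_normals (cdual K) y)).

Lemma in_K p : K p <-> forall w, L w -> enorm2 (p - w) <= 1.
Proof. by rewrite -{1}K_cc in_cdual. Qed.

Lemma contact_ball y h w : contact K y h -> L w -> enorm2 (w - (y - h)) <= 1.
Proof. by move=> [Kyh _] /in_cdual; apply. Qed.

Lemma contact_unit_normal y h : contact K y h -> unit_normals L y h.
Proof.
move=> ch; split; first exact/enorm_eq1/ch.2.
by move=> w Lw; apply: ball_edot_le0 ch.2 (contact_ball ch Lw).
Qed.

Lemma contact_normalize_ccomb y s : conic_on (contact K y) s -> ccomb s != 0 ->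
  contact K y (normalize (ccomb s)).
Proof.
move=> Hs s0; split; last exact: enorm2_normalize.
apply/in_K => w Lw; rewrite enorm2_distC; apply: ball_normalize_ccomb s0.
by apply: conic_onS Hs => h ch; split; [exact: ch.2 | exact: contact_ball ch Lw].
Qed.

Lemma contact_same_ray y h g (a b : R) : contact K y h -> contact K y g -> 0 < a ->
  a *: h = b *: g -> h = g.
Proof.
move=> ch cg a0 E; have c0 : 0 < (1 - r2) / 2 by rewrite divr_gt0 // subr_gt0.
have hz := lt_le_trans c0 (contact_edot_ge K_z ch).
have gz := lt_le_trans c0 (contact_edot_ge K_z cg).
have b0 : 0 <= b.
  have := congr1 (fun v => edot v (y - z)) E; rewrite /= !edotZl.
  by have := mulr_gt0 a0 hz; nra.
apply: unit_ray_eq (ltW a0) b0 E ch.2 cg.2.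
by rewrite scaler_eq0 negb_or gt_eqF //= -enorm2_eq0 ch.2 oner_neq0.
Qed.

Lemma pos_cone_normal y v w : N y v -> L w -> edot v (w - y) <= 0.
Proof. by move=> [t [u [t0 [[_ uN] ->]]]] Lw; rewrite edotZl mulr_ge0_le0 // uN. Qed.

Lemma normal_cone_ccomb y u s : unit_normals L y u -> conic_on (contact K y) s ->
  N y (ccomb s).
Proof.
move=> uN Hs; have [->|s0] := eqVneq (ccomb s) 0; first by exists 0, u; rewrite scale0r.
exists (enorm (ccomb s)), (normalize (ccomb s)); rewrite normalizeK enorm_ge0.
by split=> //; split=> //; exact/contact_unit_normal/contact_normalize_ccomb.
Qed.

(* Applied to [K' = K] this gives [y - u \in K]; applied to [K' = {q1, q2}] it gives
   c-extremality. *)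
Lemma extremal_normal_mem (K' : set V) y u : K' `<=` K -> compact K' -> L y ->
  unit_normals L y u -> extremal_ray (N y) (pos_ray u) ->
  (forall w, cdual K' w -> edot u (w - y) <= 0) -> K' (y - u).
Proof.
move=> sK' cK' Ly uN ext u_normal; have u1 : enorm2 u = 1 by apply/enorm_eq1; case: uN.
have K'_z p : K' p -> enorm2 (p - z) <= r2 by move/sK'; exact: K_z.
have [s Hs su] := normal_in_contact_cone cK' r2_lt1 K'_z (cdualS sK' Ly) u_normal.
have HsK : conic_on (contact K y) s by apply: conic_onS Hs => h [/sK' ? ?].
have rays := extremal_ray_ccomb ext
  (fun s' ss' => normal_cone_ccomb uN (fun a sa => HsK a (ss' a sa))).
have ray_u : pos_ray u (ccomb s) by rewrite su; exists 1; rewrite scale1r.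
by case: (unit_ray_ccomb (fun h (ch : contact K' y h) => ch.2) Hs (rays ray_u) su u1).
Qed.

Theorem extremal_normal_ext_c y u : bdry L y -> unit_normals L y u ->
  extremal_ray (N y) (pos_ray u) -> ext_c K (y - u).
Proof.
move=> /bdry_cdual Ly uN ext; have [/enorm_eq1 u1 u_normal] := uN.
split; first exact: extremal_normal_mem (@subset_refl _ K) cK Ly uN ext u_normal.
move=> q1 q2 Kq1 Kq2 /in_cdual conv.
suff : [set q1; q2] (y - u) by case=> ->; [left | right].
apply: extremal_normal_mem Ly uN ext _; first by move=> p [->|->].
  by apply: compactU; exact: compact_set1.
by move=> w /conv; rewrite enorm2_distC; exact: ball_edot_le0.
Qed.

Lemma ball_sub_K x (rho : R) v : (forall w, L w -> enorm (w - x) <= rho) ->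
  enorm v <= 1 - rho -> K (x + v).
Proof.
move=> Lx v_le; apply/in_K => w Lw; rewrite -enorm_le1 addrAC.
have : enorm (x - w) <= rho by rewrite -enormN opprB Lx.
by have := enormD (x - w) v; lra.
Qed.

Lemma ext_c_far_point x : (0 < n)%N -> ext_c K x -> exists2 y, L y & enorm2 (y - x) = 1.
Proof.
move=> n0 xe; have /in_K Kx := xe.1.
have Lx w : L w -> enorm2 (w - x) <= 1 by move=> Lw; rewrite enorm2_distC Kx.
have Lz : L z.
  by apply/in_cdual => p Kp; rewrite enorm2_distC (le_trans (K_z Kp)) // ltW.
have cL : compact L.
  apply: (compact_enorm_bounded (z := x) (r := 1) (@cdual_closed _ _ K)) => w /Lx.
  by rewrite enorm_le1.
have [y] := compact_EVT_max (ex_intro _ z Lz) cL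
  (continuous_subspaceT (@enorm2_dist_continuous R n x)).
rewrite inE => Ly y_max; exists y => //; apply/eqP; rewrite eq_le Lx //=.
rewrite leNgt; apply/negP => y_lt; pose rho := enorm (y - x).
have Lrho w : L w -> enorm (w - x) <= rho.
  by move=> Lw; rewrite /rho /enorm ler_sqrt ?enorm2_ge0 // y_max ?inE.
have rho1 : 1 - rho > 0 by rewrite subr_gt0 /rho /enorm -sqrtr1 ltr_sqrt.
have [e /[dup] e1 /enorm_eq1 e1'] := @unit_vector_exists R n n0.
have v_le : enorm ((1 - rho) *: e) <= 1 - rho by rewrite enormZ gtr0_norm // e1' mulr1.
have v_le' : enorm (- ((1 - rho) *: e)) <= 1 - rho by rewrite enormN.
move: (ext_c_midpoint xe (ball_sub_K Lrho v_le) (ball_sub_K Lrho v_le')) => /eqP.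
by rewrite scaler_eq0 gt_eqF //= -enorm2_eq0 e1 oner_eq0.
Qed.

Lemma ext_c_contact_ray x y s (tau : R) : ext_c K x -> enorm2 (y - x) = 1 ->
  conic_on (contact K y) s -> ccomb s = tau *: (y - x) ->
  forall a, a \in s -> pos_ray (y - x) (a.1 *: a.2).
Proof.
move=> xe g1 Hs s_tau a sa; set g := y - x in g1 s_tau *.
have cg : contact K y g by split; rewrite /g ?subKr //; exact: xe.1.
have [a0 ca] := Hs a sa.
have [->|a1_neq0] := eqVneq a.1 0; first by exists 0; rewrite !scale0r.
have a1_gt0 : 0 < a.1 by rewrite lt_neqAle eq_sym a1_neq0.
suff -> : a.2 = g by exists a.1.
have c0 : 0 < (1 - r2) / 2 by rewrite divr_gt0 // subr_gt0.
have tau0 : 0 < tau.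
  have := conic_coef_le (ltW c0) (@contact_edot_ge _ _ _ _ _ K_z y) Hs sa.
  rewrite s_tau edotZl; have := contact_edot_ge K_z cg.
  by have := mulr_gt0 a1_gt0 c0; nra.
set b := ccomb (rem a s); have E : a.1 *: a.2 + b = tau *: g by rewrite -s_tau (ccomb_rem sa).
have [b0|b0] := eqVneq b 0.
  by rewrite b0 addr0 in E; exact: contact_same_ray ca cg a1_gt0 E.
have cb := contact_normalize_ccomb (conic_on_rem (x := a) Hs) b0.
have conv : conv_c [set y - a.2; y - normalize b] x.
  have := conv_c_normalize2 (y := y) ca.2 cb.2 a0 (enorm_ge0 b).
  rewrite normalizeK E normalizeZ // /g subKr; apply.
  by rewrite scaler_eq0 negb_or gt_eqF //= -enorm2_eq0 g1 oner_neq0.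
case: (xe.2 _ _ ca.1 cb.1 conv) => [E1|E2]; first by rewrite /g -E1 subKr.
have bg : b = enorm b *: g by rewrite /g -E2 subKr normalizeK.
apply: contact_same_ray ca cg a1_gt0 (_ : a.1 *: a.2 = (tau - enorm b) *: g).
by rewrite scalerBl -bg -E addrK.
Qed.

Lemma far_point_bdry x y : K x -> L y -> enorm2 (y - x) = 1 -> bdry L y.
Proof.
move=> /in_K Kx Ly g1; split; first exact: subset_closure.
move=> /(interior_shift (y - x))[s s0 /Kx].
have -> : x - (y + s *: (y - x)) = (1 + s) *: (x - y).
  by rewrite scalerDl scale1r opprD addrA -scalerN opprB.
by rewrite enorm2Z enorm2_distC g1 mulr1; nra.
Qed.

Lemma ext_c_extremal_ray x y : ext_c K x -> L y -> enorm2 (y - x) = 1 ->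
  extremal_ray (N y) (pos_ray (y - x)).
Proof.
move=> xe Ly g1; set g := y - x in g1 *.
have cg : contact K y g by split; rewrite /g ?subKr //; exact: xe.1.
split; first by exists g; split=> //; rewrite -enorm2_eq0 g1 oner_neq0.
split.
  by move=> _ [t [t0 ->]]; exists t, g; do 2 split=> //; exact: contact_unit_normal.
move=> a b Na Nb [tau [tau0 ab]].
have hull v : N y v -> cone_hull (contact K y) v.
  move=> Nv; exact: (normal_in_contact_cone cK r2_lt1 K_z Ly
    (fun w Lw => pos_cone_normal Nv Lw)).
have [sa Ha sa_a] := hull a Na; have [sb Hb sb_b] := hull b Nb.
have rays := ext_c_contact_ray xe g1 (conic_on_cat Ha Hb) (_ : ccomb (sa ++ sb) = tau *: g).
rewrite -sa_a -sb_b; split; apply: pos_ray_ccomb => c sc; apply: rays;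
  by rewrite ?ccomb_cat ?sa_a ?sb_b // mem_cat sc ?orbT.
Qed.

Theorem ext_c_extremal_normal x : (0 < n)%N -> ext_c K x -> extremal_normal_points L x.
Proof.
move=> n0 xe; have [y Ly g1] := ext_c_far_point n0 xe.
have cg : contact K y (y - x) by split; rewrite ?subKr //; exact: xe.1.
exists y, (y - x); split; first exact: far_point_bdry xe.1 Ly g1.
split; first exact: contact_unit_normal.
by split; [exact: ext_c_extremal_ray | rewrite subKr].
Qed.

Theorem ext_c_eq_extremal_normal_points : (0 < n)%N -> ext_c K = extremal_normal_points L.
Proof.
move=> n0; apply/seteqP; split=> x; first exact: ext_c_extremal_normal.
by move=> [y [u [By [uN [ext ->]]]]]; exact: extremal_normal_ext_c.
Qed.

End ExtremalPoints.

Section Degenerate.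
Variables (R : realType) (n : nat).
Notation V := 'rV[R]_n.
Hypothesis n_gt0 : (0 < n)%N.

Lemma cdual_set0 : cdual (set0 : set V) = setT.
Proof. by apply/seteqP; split=> // w _; apply/in_cdual. Qed.

Lemma cdual_setT : cdual [set: V] = set0.
Proof.
have [e e1] := @unit_vector_exists R n n_gt0.
apply/seteqP; split=> // w /in_cdual /(_ (w + 2 *: e) I).
by rewrite opprD addrA subrr add0r enorm2N enorm2Z e1 mulr1 expr2; lra.
Qed.

Lemma ext_c_setT : ext_c [set: V] = set0.
Proof.
have [e e1] := @unit_vector_exists R n n_gt0.
apply/seteqP; split=> // x /(ext_c_midpoint (v := e)) /(_ I I) e0.
by move: e1; rewrite e0 enorm20; lra.
Qed.

End Degenerate.

Lemma Outrad_lt1 (R : realType) (n : nat) (K : set 'rV[R]_n) a p :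
  K `<=` eball a 1 -> K p -> Outrad K < 1 ->
  exists z (r : R), [/\ 0 <= r, r < 1 & K `<=` eball z r].
Proof.
move=> Ka Kp Out; set S := [set r | exists z, K `<=` eball z r].
have S_ge0 r : S r -> 0 <= r by move=> [z Kz]; exact: le_trans (enorm_ge0 _) (Kz p Kp).
have hS : has_inf S by split; [exists 1, a | exists 0 => r /S_ge0].
have [r Sr] : exists2 r, S r & r < Outrad K + (1 - Outrad K).
  by apply: inf_adherent hS; rewrite subr_gt0.
rewrite addrC subrK => r1; have [z Kz] := Sr; exists z, r; split=> //; exact: S_ge0.
Qed.

Unset Implicit Arguments.
Set Strict Implicit.

Theorem proposition4p9 (R : realType) (n : nat) (K : set 'rV[R]_n) :
  (2 <= n)%N -> in_Sn K -> Outrad K < 1 ->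
  ext_c K =
  [set x | exists y u : 'rV[R]_n,
      bdry (cdual K) y /\ unit_normals (cdual K) y u /\
      extremal_ray (pos_cone (unit_normals (cdual K) y)) (pos_ray u) /\
      x = y - u].
Proof.
move=> n2 [A KA] Out; have n0 : (0 < n)%N by lia.
change (ext_c K = extremal_normal_points (cdual K)).
have [[a Aa]|A0] := pselect (exists a, A a); last first.
  have A_0 : A = set0 by apply/seteqP; split=> // a Aa; case: A0; exists a.
  rewrite KA A_0 cdual_set0 ext_c_setT // cdual_setT //.
  by rewrite extremal_normal_points_bdry0 // /bdry closure0 set0D.
have [[p Kp]|K0] := pselect (exists p, K p); last first.
  have -> : K = set0 by apply/seteqP; split=> // p Kp; case: K0; exists p.
  rewrite cdual_set0 extremal_normal_points_bdry0; last by rewrite /bdry interiorT setDT.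
  by apply/seteqP; split=> // x [].
have Ka : K `<=` eball a 1 by rewrite KA => x /in_cdual /(_ a Aa); rewrite /eball /= enorm_le1.
have [z [r [r0 r1 Kz]]] := Outrad_lt1 Ka Kp Out.
have K_z q : K q -> enorm2 (q - z) <= r ^+ 2 by move=> /Kz; rewrite /eball /= enorm_le.
have cK : compact K by apply: compact_enorm_bounded (Kz); rewrite KA; exact: cdual_closed.
have K_cc : cdual (cdual K) = K by rewrite KA cdual3.
apply: ext_c_eq_extremal_normal_points K_cc _ K_z cK n0; rewrite expr2; nra.
Qed.
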